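(* Let $\eta>0$ and $\theta>0$, and let $(\bar q(t))_{t\in\mathbb Z_+}$ be a sequence in $(0,1)$ such that $$\bar q(t+1)-\bar q(t)\le-\frac{\eta\,\bar q(t)^2}{1-\log(\theta\bar q(t))}\quad\text{for all }t,$$ and $\theta\bar q(0)\le1$. Then for every $T$ with $\eta T/\theta\ge e$, $$\bar q(T)\le\frac{1}{\eta T}\log\Big(\frac{\eta T}{\theta}\Big).$$ *)

From Stdlib Require Export Reals.
Open Scope R_scope.

(** With x = θ q̄ and c = η/θ the recurrence reads
    x(t+1) <= x(t) - c x(t)^2 / (1 - ln x(t)).  The function φ(x) = ln x / x
    has derivative (1 - ln x) / x^2 and lies below its tangents at points of
    (0, e], so each step lowers φ(x) by at least c and φ(x(T)) <= - c T =: - K.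
    As φ is increasing on (0, 1] and φ(ln K / K) = K ln(ln K) / ln K - K >= - K
    for K >= e, it follows that x(T) <= ln K / K. *)

From Stdlib Require Import Reals Lra.
Open Scope R_scope.

Lemma ln_le_sub_1 s : 0 < s -> ln s <= s - 1.
Proof.
  intros Hs.
  pose proof (exp_ineq1_le (ln s)) as H.
  rewrite exp_ln in H; lra.
Qed.

Lemma ln_le a b : 0 < a -> a <= b -> ln a <= ln b.
Proof.
  intros Ha [Hab | <-]; [left; apply ln_increasing |]; lra.
Qed.

Lemma ln_div a b : 0 < a -> 0 < b -> ln (a / b) = ln a - ln b.
Proof.
  intros Ha Hb. unfold Rdiv.
  rewrite ln_mult, ln_Rinv; [ring | lra | lra | apply Rinv_0_lt_compat; lra].
Qed.

Lemma ln_nonpos x : 0 < x -> x <= 1 -> ln x <= 0.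
Proof. intros. rewrite <- ln_1. apply ln_le; lra. Qed.

Lemma ln_div_tangent x y : 0 < x -> ln x <= 1 -> 0 < y ->
  ln y / y <= ln x / x - (1 - ln x) / x ^ 2 * (x - y).
Proof.
  intros Hx Hlx Hy.
  assert (Hyx : 0 < y / x) by (apply Rdiv_lt_0_compat; lra).
  pose proof (ln_le_sub_1 _ Hyx) as Hln.
  assert (Hgap : ln x / x - (1 - ln x) / x ^ 2 * (x - y) - ln y / y
          = ((1 - ln x) * ((x - y) / x) ^ 2 + (y / x - 1 - ln (y / x))) / y).
  { rewrite ln_div by lra. field; lra. }
  enough (0 <= ((1 - ln x) * ((x - y) / x) ^ 2 + (y / x - 1 - ln (y / x))) / y)
    by lra.
  apply Rmult_le_pos; [| left; apply Rinv_0_lt_compat; lra].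
  pose proof (pow2_ge_0 ((x - y) / x)).
  apply Rplus_le_le_0_compat; [apply Rmult_le_pos |]; lra.
Qed.

Lemma ln_div_lt a b : 0 < a -> a < b -> b <= 1 -> ln a / a < ln b / b.
Proof.
  intros Ha Hab Hb.
  pose proof (ln_increasing a b Ha Hab).
  pose proof (ln_nonpos b ltac:(lra) Hb).
  apply Rlt_le_trans with (ln b / a).
  - unfold Rdiv; apply Rmult_lt_compat_r; [apply Rinv_0_lt_compat |]; lra.
  - unfold Rdiv; apply Rmult_le_compat_neg_l; [| apply Rinv_le_contravar]; lra.
Qed.

Lemma ln_ge_1 K : exp 1 <= K -> 1 <= ln K.
Proof. intros HK. rewrite <- (ln_exp 1). apply ln_le; [apply exp_pos | exact HK]. Qed.

Lemma ln_ratio_pos K : exp 1 <= K -> 0 < ln K / K < 1.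
Proof.
  intros HK.
  pose proof (exp_ineq1_le 1). pose proof (ln_ge_1 K HK) as HlnK.
  pose proof (ln_le_sub_1 K ltac:(lra)).
  split; [apply Rdiv_lt_0_compat; lra |].
  rewrite <- (Rdiv_diag K) by lra.
  unfold Rdiv; apply Rmult_lt_compat_r; [apply Rinv_0_lt_compat |]; lra.
Qed.

Lemma ln_div_ln_ratio_ge K : exp 1 <= K -> - K <= ln (ln K / K) / (ln K / K).
Proof.
  intros HK.
  pose proof (exp_ineq1_le 1). pose proof (ln_ge_1 K HK) as HlnK.
  assert (Hphi : ln (ln K / K) / (ln K / K) = K * (ln (ln K) / ln K) - K).
  { rewrite ln_div by lra. field; lra. }
  rewrite Hphi.
  enough (0 <= K * (ln (ln K) / ln K)) by lra.
  pose proof (ln_le 1 (ln K) ltac:(lra) HlnK). rewrite ln_1 in *.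
  apply Rmult_le_pos; [| apply Rmult_le_pos; [| left; apply Rinv_0_lt_compat]]; lra.
Qed.

Section Descent.

Variables (c : R) (x : nat -> R).
Hypothesis c_ge0 : 0 <= c.
Hypothesis x_pos : forall t, 0 < x t.
Hypothesis x0_le1 : x 0%nat <= 1.
Hypothesis x_step : forall t, x (S t) <= x t - c * x t ^ 2 / (1 - ln (x t)).

Lemma descent_le1 t : x t <= 1.
Proof.
  induction t as [| t IH]; [exact x0_le1 |].
  pose proof (x_step t). pose proof (ln_nonpos _ (x_pos t) IH).
  enough (0 <= c * x t ^ 2 / (1 - ln (x t))) by lra.
  apply Rmult_le_pos; [apply Rmult_le_pos; [| apply pow2_ge_0] |
                       left; apply Rinv_0_lt_compat]; lra.
Qed.

Lemma descent_ln_div t : ln (x t) / x t <= - c * INR t.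
Proof.
  induction t as [| t IH].
  - simpl. pose proof (ln_nonpos _ (x_pos 0) x0_le1).
    pose proof (Rinv_0_lt_compat _ (x_pos 0)).
    unfold Rdiv. nra.
  - rewrite S_INR.
    pose proof (x_pos t). pose proof (ln_nonpos _ (x_pos t) (descent_le1 t)).
    pose proof (ln_div_tangent (x t) (x (S t)) (x_pos t) ltac:(lra) (x_pos (S t))).
    assert (Hdrop : c <= (1 - ln (x t)) / x t ^ 2 * (x t - x (S t))).
    { apply Rle_trans with
        ((1 - ln (x t)) / x t ^ 2 * (c * x t ^ 2 / (1 - ln (x t)))).
      - right; field; split; lra.
      - apply Rmult_le_compat_l; [| pose proof (x_step t); lra].
        left; apply Rdiv_lt_0_compat; [| apply pow_lt]; lra. }
    lra.
Qed.

Lemma descent_bound t : exp 1 <= c * INR t -> x t <= ln (c * INR t) / (c * INR t).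
Proof.
  intros HK.
  destruct (Rle_or_lt (x t) (ln (c * INR t) / (c * INR t))) as [Hle | Hgt]; [exact Hle |].
  exfalso.
  pose proof (ln_ratio_pos _ HK) as [Hratio _].
  pose proof (ln_div_lt _ _ Hratio Hgt (descent_le1 t)).
  pose proof (ln_div_ln_ratio_ge _ HK).
  pose proof (descent_ln_div t).
  lra.
Qed.

End Descent.

Theorem lemma10 (eta theta : R) (q : nat -> R)
  (Heta : 0 < eta) (Htheta : 0 < theta)
  (Hq01 : forall t : nat, 0 < q t < 1)
  (Hrec : forall t : nat,
     q (S t) - q t <= - (eta * (q t)^2 / (1 - ln (theta * q t))))
  (H0 : theta * q 0%nat <= 1) :
  forall T : nat, eta * INR T / theta >= exp 1 ->
    q T <= / (eta * INR T) * ln (eta * INR T / theta).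
Proof.
  intros T HT.
  set (x t := theta * q t).
  assert (x_pos : forall t, 0 < x t).
  { intros t; apply Rmult_lt_0_compat; [| apply Hq01]; lra. }
  assert (x_step : forall t,
            x (S t) <= x t - eta / theta * x t ^ 2 / (1 - ln (x t))).
  { intros t. pose proof (Hrec t) as Hr. unfold x.
    (* 1 - ln (θ q t) is not yet known to be nonzero, so its inverse stays opaque. *)
    replace (eta / theta * (theta * q t) ^ 2 / (1 - ln (theta * q t)))
      with (theta * (eta * q t ^ 2 / (1 - ln (theta * q t))))
      by (unfold Rdiv; set (inv_D := / (1 - ln (theta * q t))); field; lra).
    apply Rmult_le_compat_l with (r := theta) in Hr; lra. }
  assert (HK : eta / theta * INR T = eta * INR T / theta) by (field; lra).
  pose proof (descent_bound (eta / theta) x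
                ltac:(left; apply Rdiv_lt_0_compat; lra) x_pos H0 x_step T) as Hx.
  rewrite HK in Hx. specialize (Hx ltac:(lra)).
  unfold x in Hx.
  assert (HT0 : INR T <> 0).
  { intros E. pose proof (exp_pos 1). rewrite E, Rmult_0_r, Rdiv_0_l in HT; lra. }
  apply Rmult_le_reg_l with theta; [exact Htheta |].
  replace (theta * (/ (eta * INR T) * ln (eta * INR T / theta)))
    with (ln (eta * INR T / theta) / (eta * INR T / theta)) by (field; lra).
  exact Hx.
Qed.
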